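(* Let $\alpha\in M^{n+1}$ satisfy the standing assumptions and let $h\in T_\alpha M^{n+1}$. Then $h\in\mathrm{Hor}^n_\alpha$ if and only if, for all $k=1,\dots,n-1$, $$\langle(D_\tau h)_k,v_k\rangle-4\frac{|\tau_k|}{|\tau_{k-1}|}\Big\langle(D_\tau h)_{k-1},\,b_{k-1}^{-1}v_k^\parallel+\big(\tfrac14-b_{k-1}^{-1}\big)\lambda_{k-1}v_{k-1}\Big\rangle=0,$$ where $v_k^\parallel$ is the parallel transport of $v_k$ along $\gamma_{k-1}$ to $x_{k-1}$ and $\lambda_{k}:=\langle v_{k+1}^\parallel,v_{k}\rangle$. Moreover every $w\in T_\alpha M^{n+1}$ decomposes uniquely as $w=mv+(w-mv)$ with $mv\in\mathrm{Ver}^n_\alpha$ and $w-mv\in\mathrm{Hor}^n_\alpha$, where $m=(m_k)_k\in\mathbb R^{n+1}$ with $m_0=m_n=0$ is characterized by the recurrence, for $k=1,\dots,n-1$, $$A_km_{k+1}+B_km_k+C_km_{k-1}=D_k,$$ with $A_k=\lambda_k$, $B_k=-1-4\frac{|\tau_k|}{|\tau_{k-1}|}\big(b_{k-1}^{-2}+\lambda_{k-1}^2(\tfrac14-b_{k-1}^{-2})\big)$, $C_k=\frac{|\tau_k|}{|\tau_{k-1}|}\lambda_{k-1}$, and $$D_k=\langle(D_\tau w)_k,v_k\rangle-4\frac{|\tau_k|}{|\tau_{k-1}|}\Big(b_{k-1}^{-1}\langle(D_\tau w)_{k-1},v_k^\parallel\rangle+\big(\tfrac14-b_{k-1}^{-1}\big)\lambda_{k-1}\langle(D_\tau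 w)_{k-1},v_{k-1}\rangle\Big).$$
   Context: $(M,\langle\cdot,\cdot\rangle)$ is a Riemannian manifold of constant sectional curvature $K\in\{-1,0,1\}$, with norm $|\cdot|$ and Levi-Civita connection $\nabla$. Fix $n\ge1$. A discrete curve is $\alpha=(x_0,\dots,x_n)\in M^{n+1}$, $T_\alpha M^{n+1}=\{w=(w_0,\dots,w_n):w_k\in T_{x_k}M\}$. Standing assumptions: $x_k\neq x_{k+1}$ and $x_k,x_{k+1}$ are joined by a geodesic $\gamma_k$ with initial velocity $\tau_k:=\log_{x_k}x_{k+1}$ (with $|\tau_k|<\pi$ if $K=1$). Set $v_k:=\tau_k/|\tau_k|$; for $u\in T_{x_k}M$, $u^T:=\langle u,v_k\rangle v_k$, $u^N:=u-u^T$; for $u\in T_{x_{k+1}}M$, $u^\parallel$ is the parallel transport of $u$ along $\gamma_k$ to $x_k$. Coefficients: $a_k=\cosh|\tau_k|,\ b_k=\sinh|\tau_k|/|\tau_k|$ if $K=-1$; $a_k=b_k=1$ if $K=0$; $a_k=\cos|\tau_k|,\ b_k=\sin|\tau_k|/|\tau_k|$ if $K=1$. Define $(D_\tau w)_k:=(w_{k+1}^\parallel-w_k)^T+b_k^{-1}(w_{k+1}^\parallel-a_kw_k)^N$ and the Riemannian metric $$G^n_\alpha(w,w)=|w_0|^2+\sum_{k=0}^{n-1}\Big(|(D_\tau w)_k^N|^2+\tfrac14|(D_\tau w)_k^T|^2\Big)\frac1{|\tau_k|}.$$ Discrete vertical and horizontal spaces: $\mathrm{Ver}^n_\alpha:=\{mv=(m_kv_k)_k: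 m\in\mathbb R^{n+1},\ m_0=m_n=0\}$ (with $v_n$ any vector, irrelevant since $m_n=0$), and $\mathrm{Hor}^n_\alpha:=\{h\in T_\alpha M^{n+1}: G^n_\alpha(h,mv)=0\ \text{for all } m\in\mathbb R^{n+1}\text{ with } m_0=m_n=0\}$. *)

From Stdlib Require Import Reals.
Open Scope R_scope.

(* Tangent spaces of the d-dimensional manifold M are modelled, via orthonormal
   frames, as R^d; a vector is a function nat -> R of which only the
   coordinates i < d matter. *)
Definition vec := nat -> R.

Fixpoint rsum (n : nat) (f : nat -> R) : R :=
  match n with O => 0 | S n' => rsum n' f + f n' end.

Definition vadd (u v : vec) : vec := fun i => u i + v i.
Definition vsub (u v : vec) : vec := fun i => u i - v i.
Definition vscale (c : R) (u : vec) : vec := fun i => c * u i.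

Definition ip (d : nat) (u v : vec) : R := rsum d (fun i => u i * v i).
Definition vnorm (d : nat) (u : vec) : R := sqrt (ip d u u).

Definition mapply (d : nat) (A : nat -> nat -> R) (u : vec) : vec :=
  fun i => rsum d (fun j => A i j * u j).

(* The sectional curvature K in {-1,0,1} *)
Inductive curv := Hyp | Flat | Sph .

Definition acoef (K : curv) (t : R) : R :=
  match K with Hyp => cosh t | Flat => 1 | Sph => cos t end.
Definition bcoef (K : curv) (t : R) : R :=
  match K with Hyp => sinh t / t | Flat => 1 | Sph => sin t / t end.

Section Curve.
(* d = dim M, n = number of segments, tau k = log_{x_k} x_{k+1} (in the frame
   at x_k), Q k = matrix of parallel transport along gamma_k from
   T_{x_{k+1}} M to T_{x_k} M (in the chosen frames). *)
Variables (d n : nat) (K : curv) (tau : nat -> vec) (Q : nat -> nat -> nat -> R).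

Definition ntau (k : nat) : R := vnorm d (tau k).
Definition ak (k : nat) : R := acoef K (ntau k).
Definition bk (k : nat) : R := bcoef K (ntau k).

Definition par (k : nat) (u : vec) : vec := mapply d (Q k) u.

Definition vdir (k : nat) : vec := vscale (/ ntau k) (tau k).

Definition tang (k : nat) (u : vec) : vec := vscale (ip d u (vdir k)) (vdir k).
Definition nrm (k : nat) (u : vec) : vec := vsub u (tang k u).

Definition Dtau (w : nat -> vec) (k : nat) : vec :=
  vadd (tang k (vsub (par k (w (S k))) (w k)))
       (vscale (/ bk k) (nrm k (vsub (par k (w (S k))) (vscale (ak k) (w k))))).

Definition Gbil (w z : nat -> vec) : R :=
  ip d (w O) (z O) +
  rsum n (fun k =>
    (ip d (nrm k (Dtau w k)) (nrm k (Dtau z k))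
     + / 4 * ip d (tang k (Dtau w k)) (tang k (Dtau z k))) * / ntau k).

Definition vert (m : nat -> R) : nat -> vec := fun k => vscale (m k) (vdir k).

Definition fsub (w z : nat -> vec) : nat -> vec := fun k => vsub (w k) (z k).

Definition Hor (h : nat -> vec) : Prop :=
  forall m : nat -> R, m O = 0 -> m n = 0 -> Gbil h (vert m) = 0.

Definition lam (k : nat) : R := ip d (par k (vdir (S k))) (vdir k).

Definition ratio (k : nat) : R := ntau k / ntau (k - 1).

Definition HorCond (h : nat -> vec) (k : nat) : Prop :=
  ip d (Dtau h k) (vdir k)
  - 4 * ratio k *
    ip d (Dtau h (k - 1))
       (vadd (vscale (/ bk (k - 1)) (par (k - 1) (vdir k)))
             (vscale ((/ 4 - / bk (k - 1)) * lam (k - 1)) (vdir (k - 1))))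
  = 0.

Definition Acoef (k : nat) : R := lam k.
Definition Bcoef (k : nat) : R :=
  -1 - 4 * ratio k * (/ (bk (k - 1)) ^ 2
                      + (lam (k - 1)) ^ 2 * (/ 4 - / (bk (k - 1)) ^ 2)).
Definition Ccoef (k : nat) : R := ratio k * lam (k - 1).
Definition Dcoef (w : nat -> vec) (k : nat) : R :=
  ip d (Dtau w k) (vdir k)
  - 4 * ratio k *
    (/ bk (k - 1) * ip d (Dtau w (k - 1)) (par (k - 1) (vdir k))
     + (/ 4 - / bk (k - 1)) * lam (k - 1) * ip d (Dtau w (k - 1)) (vdir (k - 1))).

End Curve.

(* Summation by parts turns G(h, mv) into - sum_k m_k D_k(h) / (4 |tau_k|), where D_k(h) is
   the left-hand side of the k-th horizontality condition; hence h is horizontal iff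
   D_k(h) = 0 for 0 < k < n.  D_k is linear and D_k(mv) is the tridiagonal expression
   A_k m_{k+1} + B_k m_k + C_k m_{k-1}, so w - mv is horizontal iff m solves the recurrence
   with right-hand side D_k(w).  A solution of the homogeneous recurrence makes mv horizontal,
   so G(mv, mv) = 0 and m = 0 by positive definiteness; a square linear system with trivial
   kernel is solvable, which gives existence and uniqueness of m. *)

From Stdlib Require Import Reals Lra Lia FunctionalExtensionality Classical.
Open Scope R_scope.

Lemma rsum_ext n f g : (forall k, (k < n)%nat -> f k = g k) -> rsum n f = rsum n g.
Proof.
  induction n as [|n IH]; intros H; simpl; [reflexivity|].
  rewrite IH by (intros; apply H; lia). rewrite H by lia. reflexivity.
Qed.

Lemma rsum_eq0 n f : (forall k, (k < n)%nat -> f k = 0) -> rsum n f = 0.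
Proof.
  induction n as [|n IH]; intros H; simpl; [reflexivity|].
  rewrite IH by (intros; apply H; lia). rewrite H by lia. ring.
Qed.

Lemma rsum_plus n f g : rsum n (fun k => f k + g k) = rsum n f + rsum n g.
Proof. induction n; simpl; [ring|]. rewrite IHn; ring. Qed.

Lemma rsum_minus n f g : rsum n (fun k => f k - g k) = rsum n f - rsum n g.
Proof. induction n; simpl; [ring|]. rewrite IHn; ring. Qed.

Lemma rsum_scal n c f : rsum n (fun k => c * f k) = c * rsum n f.
Proof. induction n; simpl; [ring|]. rewrite IHn; ring. Qed.

Lemma rsum_nonneg n f : (forall k, (k < n)%nat -> 0 <= f k) -> 0 <= rsum n f.
Proof.
  induction n as [|n IH]; intros H; simpl; [lra|].
  assert (0 <= f n) by (apply H; lia).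
  assert (0 <= rsum n f) by (apply IH; intros; apply H; lia). lra.
Qed.

Lemma rsum_nonneg_eq0 n f : (forall k, (k < n)%nat -> 0 <= f k) -> rsum n f = 0 ->
  forall k, (k < n)%nat -> f k = 0.
Proof.
  induction n as [|n IH]; simpl; intros H E k Hk; [lia|].
  assert (0 <= f n) by (apply H; lia).
  assert (0 <= rsum n f) by (apply rsum_nonneg; intros; apply H; lia).
  destruct (Nat.eq_dec k n) as [->|]; [lra|].
  apply IH; [intros; apply H; lia | lra | lia].
Qed.

Lemma rsum_delta n p c x :
  rsum n (fun j => (if Nat.eqb j p then c else 0) * x j) = if Nat.ltb p n then c * x p else 0.
Proof.
  induction n as [|n IH]; simpl; [reflexivity|]. rewrite IH.
  destruct (Nat.eqb_spec n p), (Nat.ltb_spec p n), (Nat.ltb_spec p (S n));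
    try lia; subst; ring.
Qed.

Lemma rsum_shift n f : rsum n (fun k => f (S k)) = rsum n f + f n - f O.
Proof. induction n; simpl; [ring|]. rewrite IHn. ring. Qed.

Section InnerProduct.
Variable d : nat.

Lemma ip_sym u v : ip d u v = ip d v u.
Proof. apply rsum_ext; intros; ring. Qed.

Lemma ip_addl u v w : ip d (vadd u v) w = ip d u w + ip d v w.
Proof. unfold ip, vadd. rewrite <- rsum_plus. apply rsum_ext; intros; ring. Qed.

Lemma ip_subl u v w : ip d (vsub u v) w = ip d u w - ip d v w.
Proof. unfold ip, vsub. rewrite <- rsum_minus. apply rsum_ext; intros; ring. Qed.

Lemma ip_scall c u w : ip d (vscale c u) w = c * ip d u w.
Proof. unfold ip, vscale. rewrite <- rsum_scal. apply rsum_ext; intros; ring. Qed.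

Lemma ip_addr u v w : ip d w (vadd u v) = ip d w u + ip d w v.
Proof. rewrite !(ip_sym w). apply ip_addl. Qed.

Lemma ip_subr u v w : ip d w (vsub u v) = ip d w u - ip d w v.
Proof. rewrite !(ip_sym w). apply ip_subl. Qed.

Lemma ip_scalr c u w : ip d w (vscale c u) = c * ip d w u.
Proof. rewrite !(ip_sym w). apply ip_scall. Qed.

Lemma ip_self_nonneg u : 0 <= ip d u u.
Proof. apply rsum_nonneg; intros. apply Rle_0_sqr. Qed.

Lemma ip_self_eq0 u : ip d u u = 0 -> forall w, ip d u w = 0.
Proof.
  intros H w. apply rsum_eq0. intros i Hi.
  assert (Hui : u i * u i = 0)
    by exact (rsum_nonneg_eq0 d (fun i => u i * u i) (fun i _ => Rle_0_sqr (u i)) H i Hi).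
  assert (u i = 0) as -> by nra. ring.
Qed.

Lemma mapply_sub A u v : mapply d A (vsub u v) = vsub (mapply d A u) (mapply d A v).
Proof.
  apply functional_extensionality; intro i. unfold mapply, vsub.
  rewrite <- rsum_minus. apply rsum_ext; intros; ring.
Qed.

Lemma mapply_scale A c u : mapply d A (vscale c u) = vscale c (mapply d A u).
Proof.
  apply functional_extensionality; intro i. unfold mapply, vscale.
  rewrite <- rsum_scal. apply rsum_ext; intros; ring.
Qed.

End InnerProduct.

Definition matvec (N : nat) (a : nat -> nat -> R) (x : nat -> R) (i : nat) : R :=
  rsum N (fun j => a i j * x j).

Definition matvec_injective N a : Prop :=
  forall x, (forall i, (i < N)%nat -> matvec N a x i = 0) -> forall i, (i < N)%nat -> x i = 0.

Definition matvec_surjective N a : Prop :=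
  forall b, exists x, forall i, (i < N)%nat -> matvec N a x i = b i.

Section RowInvolution.
Variables (N : nat) (sg : nat -> nat).
Hypothesis sg_invol : forall i, (i < N)%nat -> (sg i < N)%nat /\ sg (sg i) = i.

Lemma matvec_injective_rows a :
  matvec_injective N a -> matvec_injective N (fun i => a (sg i)).
Proof.
  intros Ha x Hx. apply Ha. intros i Hi. destruct (sg_invol i Hi) as [Hsi Hssi].
  rewrite <- Hssi. exact (Hx _ Hsi).
Qed.

Lemma matvec_surjective_rows a :
  matvec_surjective N (fun i => a (sg i)) -> matvec_surjective N a.
Proof.
  intros Ha b. destruct (Ha (fun i => b (sg i))) as [x Hx]. exists x.
  intros i Hi. destruct (sg_invol i Hi) as [Hsi Hssi].
  rewrite <- Hssi. exact (Hx _ Hsi).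
Qed.

End RowInvolution.

Lemma matvec_pivot N a :
  matvec_injective (S N) a -> exists r, (r < S N)%nat /\ a r N <> 0.
Proof.
  intros Ha. apply NNPP. intros Hno.
  assert (Hcol : forall i, (i < S N)%nat -> a i N = 0).
  { intros i Hi. apply NNPP. intros Hi'. apply Hno. exists i. split; assumption. }
  set (e := fun j => if Nat.eqb j N then 1 else 0).
  assert (He : forall i, (i < S N)%nat -> matvec (S N) a e i = 0).
  { intros i Hi. unfold matvec, e.
    rewrite (rsum_ext _ _ (fun j => (if Nat.eqb j N then a i N else 0) * 1)).
    - rewrite rsum_delta, Hcol by exact Hi. destruct (N <? S N); ring.
    - intros j _. destruct (Nat.eqb_spec j N); [subst|]; ring. }
  specialize (Ha e He N ltac:(lia)). unfold e in Ha. rewrite Nat.eqb_refl in Ha. lra.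
Qed.

Section Elimination.
Variables (N : nat) (a : nat -> nat -> R).
Hypothesis pivot_nz : a N N <> 0.

Definition eliminate i j : R := a i j - a i N / a N N * a N j.

Definition back_substitute (x : nat -> R) (beta : R) (j : nat) : R :=
  if Nat.ltb j N then x j else (beta - matvec N a x N) / a N N.

Lemma matvec_back_substitute_last x beta :
  matvec (S N) a (back_substitute x beta) N = beta.
Proof.
  unfold matvec, back_substitute. simpl. rewrite Nat.ltb_irrefl.
  rewrite (rsum_ext N _ (fun j => a N j * x j)).
  - unfold matvec. field. exact pivot_nz.
  - intros j Hj. apply Nat.ltb_lt in Hj. rewrite Hj. reflexivity.
Qed.

Lemma matvec_back_substitute x beta i :
  matvec (S N) a (back_substitute x beta) i = matvec N eliminate x i + a i N / a N N * beta.
Proof.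
  unfold matvec, back_substitute, eliminate. simpl. rewrite Nat.ltb_irrefl.
  rewrite (rsum_ext N (fun j => a i j * (if Nat.ltb j N then x j else _))
                     (fun j => a i j * x j)).
  - rewrite (rsum_ext N (fun j => (a i j - a i N / a N N * a N j) * x j)
                        (fun j => a i j * x j - a i N / a N N * (a N j * x j)))
      by (intros; ring).
    rewrite rsum_minus, rsum_scal. unfold matvec. field. exact pivot_nz.
  - intros j Hj. apply Nat.ltb_lt in Hj. rewrite Hj. reflexivity.
Qed.

Lemma matvec_injective_eliminate :
  matvec_injective (S N) a -> matvec_injective N eliminate.
Proof.
  intros Ha x Hx i Hi.
  assert (Hz : back_substitute x 0 i = 0).
  { apply Ha; [|lia]. intros i' Hi'.
    destruct (Nat.eq_dec i' N) as [->|Hne].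
    - apply matvec_back_substitute_last.
    - rewrite matvec_back_substitute, Hx by lia. ring. }
  unfold back_substitute in Hz. rewrite (proj2 (Nat.ltb_lt i N) Hi) in Hz. exact Hz.
Qed.

Lemma matvec_surjective_eliminate :
  matvec_surjective N eliminate -> matvec_surjective (S N) a.
Proof.
  intros Hc b. destruct (Hc (fun i => b i - a i N / a N N * b N)) as [x Hx].
  exists (back_substitute x (b N)). intros i Hi.
  destruct (Nat.eq_dec i N) as [->|Hne].
  - apply matvec_back_substitute_last.
  - rewrite matvec_back_substitute, Hx by lia. ring.
Qed.

End Elimination.

Definition swap (r s i : nat) : nat :=
  if Nat.eqb i r then s else if Nat.eqb i s then r else i.

Lemma swap_involutive m r s : (r < m)%nat -> (s < m)%nat ->
  forall i, (i < m)%nat -> (swap r s i < m)%nat /\ swap r s (swap r s i) = i.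
Proof.
  intros Hr Hs i Hi. unfold swap.
  destruct (Nat.eqb_spec i r), (Nat.eqb_spec i s); subst;
    repeat (rewrite ?Nat.eqb_refl; simpl);
    repeat match goal with |- context [Nat.eqb ?p ?q] => destruct (Nat.eqb_spec p q) end;
    split; lia.
Qed.

Lemma matvec_surjective_of_injective N a :
  matvec_injective N a -> matvec_surjective N a.
Proof.
  revert a. induction N as [|N IH]; intros a Ha.
  { intros b. exists (fun _ => 0). intros; lia. }
  destruct (matvec_pivot N a Ha) as [r [Hr Hp]].
  pose proof (swap_involutive (S N) r N Hr ltac:(lia)) as Hsw.
  apply (matvec_surjective_rows (S N) (swap r N) Hsw).
  assert (Hp' : a (swap r N N) N <> 0).
  { unfold swap. rewrite Nat.eqb_refl. destruct (Nat.eqb_spec N r); subst; exact Hp. }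
  apply (matvec_surjective_eliminate N _ Hp'), IH.
  apply (matvec_injective_eliminate N _ Hp'), (matvec_injective_rows (S N) _ Hsw), Ha.
Qed.

Section Curve.
Variables (d n : nat) (K : curv) (tau : nat -> vec) (Q : nat -> nat -> nat -> R).

Lemma ntau_gt0 k : ntau d tau k <> 0 -> 0 < ntau d tau k.
Proof. intros H. pose proof (sqrt_pos (ip d (tau k) (tau k))). unfold ntau, vnorm in *. lra. Qed.

Lemma vdir_unit k : ntau d tau k <> 0 -> ip d (vdir d tau k) (vdir d tau k) = 1.
Proof.
  intros H. unfold vdir. rewrite ip_scall, ip_scalr.
  replace (ip d (tau k) (tau k)) with (ntau d tau k * ntau d tau k).
  - field. exact H.
  - unfold ntau, vnorm. rewrite sqrt_sqrt; [reflexivity | apply ip_self_nonneg].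
Qed.

Lemma bk_gt0 k : ntau d tau k <> 0 -> (K = Sph -> ntau d tau k < PI) -> 0 < bk d K tau k.
Proof.
  intros H Hpi. pose proof (ntau_gt0 k H) as Hpos.
  unfold bk, bcoef. destruct K.
  - apply Rdiv_lt_0_compat; [|exact Hpos]. unfold sinh.
    assert (exp (- ntau d tau k) < exp (ntau d tau k)) by (apply exp_increasing; lra). lra.
  - lra.
  - apply Rdiv_lt_0_compat; [|exact Hpos]. apply sin_gt_0; [exact Hpos | exact (Hpi eq_refl)].
Qed.

Lemma ip_nrm_nrm k u w : ntau d tau k <> 0 ->
  ip d (nrm d tau k u) (nrm d tau k w)
  = ip d u w - ip d u (vdir d tau k) * ip d w (vdir d tau k).
Proof.
  intros H. unfold nrm, tang.
  rewrite !ip_subl, !ip_subr, !ip_scall, !ip_scalr, vdir_unit by exact H.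
  rewrite (ip_sym d (vdir d tau k) w). ring.
Qed.

Lemma ip_tang_tang k u w : ntau d tau k <> 0 ->
  ip d (tang d tau k u) (tang d tau k w) = ip d u (vdir d tau k) * ip d w (vdir d tau k).
Proof. intros H. unfold tang. rewrite ip_scall, ip_scalr, vdir_unit by exact H. ring. Qed.

Lemma ip_Dtau w k u :
  ip d (Dtau d K tau Q w k) u =
  (ip d (par d Q k (w (S k))) (vdir d tau k) - ip d (w k) (vdir d tau k))
    * ip d (vdir d tau k) u
  + / bk d K tau k *
    (ip d (par d Q k (w (S k))) u - ak d K tau k * ip d (w k) u
     - (ip d (par d Q k (w (S k))) (vdir d tau k) - ak d K tau k * ip d (w k) (vdir d tau k))
       * ip d (vdir d tau k) u).
Proof. unfold Dtau, nrm, tang. repeat rewrite ?ip_addl, ?ip_subl, ?ip_scall. ring. Qed.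

Lemma ip_Dtau_fsub w z k u :
  ip d (Dtau d K tau Q (fsub w z) k) u
  = ip d (Dtau d K tau Q w k) u - ip d (Dtau d K tau Q z k) u.
Proof. rewrite !ip_Dtau. unfold fsub, par. rewrite mapply_sub, !ip_subl. ring. Qed.

Lemma ip_Dtau_vert m k u : ntau d tau k <> 0 ->
  ip d (Dtau d K tau Q (vert d tau m) k) u =
  (m (S k) * lam d tau Q k - m k) * ip d (vdir d tau k) u
  + / bk d K tau k * m (S k)
    * (ip d (par d Q k (vdir d tau (S k))) u - lam d tau Q k * ip d (vdir d tau k) u).
Proof.
  intros H. rewrite ip_Dtau. unfold vert, par. rewrite mapply_scale, !ip_scall, vdir_unit by exact H.
  unfold lam, par. ring.
Qed.

Definition Gseg (w z : nat -> vec) (k : nat) : R :=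
  (ip d (nrm d tau k (Dtau d K tau Q w k)) (nrm d tau k (Dtau d K tau Q z k))
   + / 4 * ip d (tang d tau k (Dtau d K tau Q w k)) (tang d tau k (Dtau d K tau Q z k)))
  * / ntau d tau k.

Lemma Gbil_Gseg w z : Gbil d n K tau Q w z = ip d (w O) (z O) + rsum n (Gseg w z).
Proof. reflexivity. Qed.

Lemma Gseg_self_nonneg w k : ntau d tau k <> 0 -> 0 <= Gseg w w k.
Proof.
  intros H. pose proof (ntau_gt0 k H).
  pose proof (ip_self_nonneg d (nrm d tau k (Dtau d K tau Q w k))).
  pose proof (ip_self_nonneg d (tang d tau k (Dtau d K tau Q w k))).
  apply Rmult_le_pos; [lra | apply Rlt_le, Rinv_0_lt_compat; assumption].
Qed.

Lemma Gseg_self_eq0 w k : ntau d tau k <> 0 -> Gseg w w k = 0 ->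
  forall u, ip d (Dtau d K tau Q w k) u = 0.
Proof.
  intros H Hw u. unfold Gseg in Hw. set (X := Dtau d K tau Q w k) in *.
  pose proof (ntau_gt0 k H).
  pose proof (ip_self_nonneg d (nrm d tau k X)). pose proof (ip_self_nonneg d (tang d tau k X)).
  apply Rmult_integral in Hw. destruct Hw as [Hw|Hw];
    [|apply Rinv_neq_0_compat in Hw; [contradiction | lra]].
  assert (Hn : ip d (nrm d tau k X) u = 0) by (apply ip_self_eq0; lra).
  assert (Ht : ip d (tang d tau k X) u = 0) by (apply ip_self_eq0; lra).
  unfold nrm in Hn. rewrite ip_subl, Ht in Hn. lra.
Qed.

Lemma Dcoef_fsub w z k : Dcoef d K tau Q (fsub w z) k = Dcoef d K tau Q w k - Dcoef d K tau Q z k.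
Proof. unfold Dcoef. rewrite !ip_Dtau_fsub. ring. Qed.

Lemma HorCond_iff_Dcoef h k : HorCond d K tau Q h k <-> Dcoef d K tau Q h k = 0.
Proof.
  unfold HorCond, Dcoef. rewrite ip_addr, !ip_scalr.
  split; intros E; rewrite <- E; ring.
Qed.

End Curve.

Section Horizontal.
Variables (d n : nat) (K : curv) (tau : nat -> vec) (Q : nat -> nat -> nat -> R).
Hypothesis tau_neq0 : forall k, (k < n)%nat -> ntau d tau k <> 0.
Hypothesis tau_lt_PI : forall k, (k < n)%nat -> K = Sph -> ntau d tau k < PI.
Hypothesis par_isometry : forall k, (k < n)%nat -> forall u v : vec,
  ip d (par d Q k u) (par d Q k v) = ip d u v.

Definition recurrence (rhs : nat -> R) (m : nat -> R) : Prop :=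
  forall k, (1 <= k)%nat -> (k <= n - 1)%nat ->
    Acoef d tau Q k * m (S k) + Bcoef d K tau Q k * m k + Ccoef d tau Q k * m (k - 1)%nat
    = rhs k.

(* Segment k of G(h, mv) involves only m_k and m_{k+1}; summation by parts collects the
   coefficient of each m_k. *)
Lemma Gbil_vert_r h m : m O = 0 -> m n = 0 ->
  Gbil d n K tau Q h (vert d tau m)
  = - rsum n (fun k => m k * (Dcoef d K tau Q h k / (4 * ntau d tau k))).
Proof.
  intros H0 Hn.
  set (Av := fun k => ip d (Dtau d K tau Q h k) (vdir d tau k)).
  set (c := fun k => (lam d tau Q k * Av k / 4
       + / bk d K tau k * (ip d (Dtau d K tau Q h k) (par d Q k (vdir d tau (S k)))
                          - lam d tau Q k * Av k)) / ntau d tau k).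
  assert (Hseg : forall k, (k < n)%nat ->
    Gseg d K tau Q h (vert d tau m) k = m (S k) * c k - m k * Av k / (4 * ntau d tau k)).
  { intros k Hk. specialize (tau_neq0 k Hk) as Hk'.
    unfold Gseg. rewrite ip_nrm_nrm, ip_tang_tang by exact Hk'.
    rewrite (ip_sym d (Dtau d K tau Q h k)), !ip_Dtau_vert, vdir_unit by exact Hk'.
    rewrite !(ip_sym d (vdir d tau k)), (ip_sym d (par d Q k _) (Dtau d K tau Q h k)).
    unfold c, Av, lam. set (ib := / bk d K tau k). field. exact Hk'. }
  assert (HD : forall k, (S k < n)%nat ->
    Dcoef d K tau Q h (S k) = Av (S k) - 4 * ntau d tau (S k) * c k).
  { intros k Hk. unfold Dcoef, ratio, c, Av. simpl (S k - 1)%nat. rewrite Nat.sub_0_r.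
    set (ib := / bk d K tau k). field. apply tau_neq0. lia. }
  set (f := fun j => m j * c (Nat.pred j)).
  rewrite Gbil_Gseg. unfold vert at 1. rewrite ip_scalr, H0, Rmult_0_l, Rplus_0_l.
  rewrite (rsum_ext n _ _ Hseg), rsum_minus.
  change (rsum n (fun k => m (S k) * c k)) with (rsum n (fun k => f (S k))).
  rewrite rsum_shift. unfold f at 2 3. rewrite H0, Hn.
  transitivity (rsum n (fun k => f k - m k * Av k / (4 * ntau d tau k))); [rewrite rsum_minus; ring|].
  replace (- _) with (-1 * rsum n (fun k => m k * (Dcoef d K tau Q h k / (4 * ntau d tau k))))
    by ring.
  rewrite <- rsum_scal. apply rsum_ext. intros [|k] Hk; unfold f.
  - rewrite H0. lra.
  - rewrite HD by exact Hk. simpl Nat.pred. field. apply tau_neq0. exact Hk.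
Qed.

Lemma Hor_iff_Dcoef h :
  Hor d n K tau Q h <-> forall k, (1 <= k)%nat -> (k <= n - 1)%nat -> Dcoef d K tau Q h k = 0.
Proof.
  split.
  - intros Hh k H1 H2.
    assert (Hk : ntau d tau k <> 0) by (apply tau_neq0; lia).
    set (e := fun j => if Nat.eqb j k then 1 else 0).
    assert (He0 : e O = 0) by (unfold e; destruct (Nat.eqb_spec 0 k); [lia | reflexivity]).
    assert (Hen : e n = 0) by (unfold e; destruct (Nat.eqb_spec n k); [lia | reflexivity]).
    specialize (Hh e He0 Hen). rewrite Gbil_vert_r in Hh by assumption.
    unfold e in Hh. rewrite rsum_delta in Hh.
    destruct (Nat.ltb_spec k n); [|lia].
    replace (Dcoef d K tau Q h k)
      with (Dcoef d K tau Q h k / (4 * ntau d tau k) * (4 * ntau d tau k)) by (field; exact Hk).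
    replace (Dcoef d K tau Q h k / (4 * ntau d tau k)) with 0 by lra. ring.
  - intros HD m H0 Hn. rewrite Gbil_vert_r by assumption.
    rewrite rsum_eq0; [ring|]. intros [|k] Hk.
    + rewrite H0. ring.
    + rewrite HD by lia. unfold Rdiv. ring.
Qed.

Lemma Hor_iff_HorCond h :
  Hor d n K tau Q h <-> forall k, (1 <= k)%nat -> (k <= n - 1)%nat -> HorCond d K tau Q h k.
Proof.
  rewrite Hor_iff_Dcoef. split; intros H k H1 H2; apply HorCond_iff_Dcoef; auto.
Qed.

Lemma Dcoef_vert m k : (1 <= k)%nat -> (k <= n - 1)%nat ->
  Dcoef d K tau Q (vert d tau m) k
  = Acoef d tau Q k * m (S k) + Bcoef d K tau Q k * m k + Ccoef d tau Q k * m (k - 1)%nat.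
Proof.
  intros H1 H2. destruct k as [|j]; [lia|].
  assert (Hj : ntau d tau j <> 0) by (apply tau_neq0; lia).
  assert (Hj' : ntau d tau (S j) <> 0) by (apply tau_neq0; lia).
  unfold Dcoef, Acoef, Bcoef, Ccoef, ratio. simpl (S j - 1)%nat. rewrite Nat.sub_0_r.
  rewrite !ip_Dtau_vert by assumption.
  rewrite par_isometry, !vdir_unit by (assumption || lia).
  rewrite (ip_sym d (vdir d tau j) (par d Q j (vdir d tau (S j)))).
  fold (lam d tau Q j) (lam d tau Q (S j)). rewrite <- pow_inv.
  set (ib := / bk d K tau j). set (ib' := / bk d K tau (S j)). field. exact Hj.
Qed.

Lemma Gbil_self_eq0_Dtau w : Gbil d n K tau Q w w = 0 ->
  forall k, (k < n)%nat -> forall u, ip d (Dtau d K tau Q w k) u = 0.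
Proof.
  intros Hw k Hk. apply Gseg_self_eq0; [exact (tau_neq0 k Hk)|].
  assert (Hseg : forall j, (j < n)%nat -> 0 <= Gseg d K tau Q w w j)
    by (intros j Hj; apply Gseg_self_nonneg, tau_neq0, Hj).
  rewrite Gbil_Gseg in Hw. pose proof (ip_self_nonneg d (w O)).
  pose proof (rsum_nonneg _ _ Hseg).
  apply (rsum_nonneg_eq0 n); [exact Hseg | lra | exact Hk].
Qed.

(* Testing (D_tau mv)_k against v_k gives m_{k+1} lambda_k = m_k, against v_{k+1}^par
   gives m_{k+1} (1 - lambda_k^2) = 0 once m_k = 0; together they propagate m = 0. *)
Lemma vert_eq0_of_Dtau m : m O = 0 -> m n = 0 ->
  (forall k, (k < n)%nat -> forall u, ip d (Dtau d K tau Q (vert d tau m) k) u = 0) ->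
  forall k, (k <= n)%nat -> m k = 0.
Proof.
  intros H0 Hn HD.
  assert (Hstep : forall k, (S k < n)%nat -> m k = 0 -> m (S k) = 0).
  { intros k Hk Hmk.
    assert (Hk0 : ntau d tau k <> 0) by (apply tau_neq0; lia).
    assert (Hk1 : ntau d tau (S k) <> 0) by (apply tau_neq0; lia).
    assert (Hb : / bk d K tau k <> 0)
      by (apply Rinv_neq_0_compat, Rgt_not_eq, bk_gt0; [exact Hk0 | apply tau_lt_PI; lia]).
    pose proof (HD k ltac:(lia) (vdir d tau k)) as Ev.
    pose proof (HD k ltac:(lia) (par d Q k (vdir d tau (S k)))) as Ep.
    rewrite ip_Dtau_vert, vdir_unit in Ev by exact Hk0.
    rewrite ip_Dtau_vert, par_isometry, vdir_unit in Ep by (assumption || lia).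
    rewrite (ip_sym d (vdir d tau k)) in Ep. fold (lam d tau Q k) in Ev, Ep.
    rewrite Hmk in Ev, Ep.
    set (l := lam d tau Q k) in *.
    assert (E1 : m (S k) * l = 0) by lra.
    assert (E2 : / bk d K tau k * (m (S k) * (1 - l * l)) = 0).
    { rewrite <- Ep. replace (m (S k) * l - 0) with (m (S k) * l) by ring. rewrite E1. ring. }
    apply Rmult_integral in E2. destruct E2 as [E2|E2]; [contradiction|].
    replace (m (S k)) with (m (S k) * (1 - l * l) + m (S k) * l * l) by ring.
    rewrite E2, E1. ring. }
  intros k Hk. destruct (Nat.eq_dec k n) as [->|Hkn]; [exact Hn|].
  induction k as [|k IH]; [exact H0|]. apply Hstep; [lia|]. apply IH; lia.
Qed.

Lemma recurrence_homogeneous_eq0 m : m O = 0 -> m n = 0 -> recurrence (fun _ => 0) m ->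
  forall k, (k <= n)%nat -> m k = 0.
Proof.
  intros H0 Hn Hrec. apply vert_eq0_of_Dtau; [exact H0 | exact Hn |].
  apply Gbil_self_eq0_Dtau.
  assert (Hv : Hor d n K tau Q (vert d tau m)).
  { apply Hor_iff_Dcoef. intros k H1 H2. rewrite Dcoef_vert by assumption. exact (Hrec k H1 H2). }
  exact (Hv m H0 Hn).
Qed.

Lemma Hor_fsub_vert_iff w m :
  Hor d n K tau Q (fsub w (vert d tau m)) <-> recurrence (Dcoef d K tau Q w) m.
Proof.
  rewrite Hor_iff_Dcoef. unfold recurrence.
  split; intros H k H1 H2; specialize (H k H1 H2);
    rewrite Dcoef_fsub, Dcoef_vert in * by assumption; lra.
Qed.

Lemma recurrence_unique rhs m1 m2 :
  m1 O = 0 -> m1 n = 0 -> recurrence rhs m1 ->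
  m2 O = 0 -> m2 n = 0 -> recurrence rhs m2 ->
  forall k, (k <= n)%nat -> m1 k = m2 k.
Proof.
  intros H10 H1n H1 H20 H2n H2 k Hk.
  enough (m1 k - m2 k = 0) by lra.
  apply (recurrence_homogeneous_eq0 (fun j => m1 j - m2 j)); [lra | lra | | exact Hk].
  intros j Hj1 Hj2. specialize (H1 j Hj1 Hj2). specialize (H2 j Hj1 Hj2). lra.
Qed.

Definition recurrence_matrix (i j : nat) : R :=
  (if Nat.eqb j (S i) then Acoef d tau Q (S i) else 0)
  + (if Nat.eqb j i then Bcoef d K tau Q (S i) else 0)
  + (if Nat.eqb (S j) i then Ccoef d tau Q (S i) else 0).

(* The unknowns m_1, ..., m_{n-1} are stored as x_0, ..., x_{n-2}. *)
Definition pad_boundary (x : nat -> R) (k : nat) : R :=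
  match k with O => 0 | S j => if Nat.ltb j (n - 1) then x j else 0 end.

Lemma pad_boundary_last x : pad_boundary x n = 0.
Proof.
  unfold pad_boundary. destruct n as [|n']; [reflexivity|].
  simpl. rewrite Nat.sub_0_r, Nat.ltb_irrefl. reflexivity.
Qed.

Lemma matvec_recurrence_matrix x i : (i < n - 1)%nat ->
  matvec (n - 1) recurrence_matrix x i
  = Acoef d tau Q (S i) * pad_boundary x (S (S i)) + Bcoef d K tau Q (S i) * pad_boundary x (S i)
    + Ccoef d tau Q (S i) * pad_boundary x (S i - 1)%nat.
Proof.
  intros Hi. unfold matvec, recurrence_matrix.
  rewrite (rsum_ext _ _ (fun j => (if Nat.eqb j (S i) then Acoef d tau Q (S i) else 0) * x j
      + (if Nat.eqb j i then Bcoef d K tau Q (S i) else 0) * x j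
      + (if Nat.eqb (S j) i then Ccoef d tau Q (S i) else 0) * x j)) by (intros; ring).
  rewrite !rsum_plus, !rsum_delta. simpl (S i - 1)%nat. rewrite Nat.sub_0_r.
  unfold pad_boundary. rewrite (proj2 (Nat.ltb_lt i (n - 1)) Hi).
  destruct i as [|i].
  - rewrite rsum_eq0 by (intros; simpl; ring).
    destruct (Nat.ltb 1 (n - 1)); ring.
  - simpl (Nat.eqb (S _) (S i)). rewrite rsum_delta, (proj2 (Nat.ltb_lt i (n - 1))) by lia.
    destruct (Nat.ltb (S (S i)) (n - 1)); ring.
Qed.

Lemma recurrence_solvable rhs : exists m, m O = 0 /\ m n = 0 /\ recurrence rhs m.
Proof.
  assert (Hinj : matvec_injective (n - 1) recurrence_matrix).
  { intros x Hx i Hi.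
    assert (Hz : pad_boundary x (S i) = 0).
    { apply recurrence_homogeneous_eq0; [reflexivity | apply pad_boundary_last | | lia].
      intros [|k] H1 H2; [lia|]. rewrite <- matvec_recurrence_matrix by lia. apply Hx. lia. }
    simpl in Hz. rewrite (proj2 (Nat.ltb_lt i (n - 1)) Hi) in Hz. exact Hz. }
  destruct (matvec_surjective_of_injective _ _ Hinj (fun i => rhs (S i))) as [x Hx].
  exists (pad_boundary x). split; [reflexivity|]. split; [apply pad_boundary_last|].
  intros [|k] H1 H2; [lia|]. rewrite <- matvec_recurrence_matrix by lia. apply Hx. lia.
Qed.

End Horizontal.

Theorem mainTheorem10 (d n : nat) (K : curv) (tau : nat -> vec)
  (Q : nat -> nat -> nat -> R) :
  (1 <= n)%nat ->
  (forall k, (k < n)%nat -> ntau d tau k <> 0) ->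
  (forall k, (k < n)%nat -> K = Sph -> ntau d tau k < PI) ->
  (forall k, (k < n)%nat -> forall u v : vec,
      ip d (par d Q k u) (par d Q k v) = ip d u v) ->
  (forall h : nat -> vec,
      Hor d n K tau Q h <->
      (forall k, (1 <= k)%nat -> (k <= n - 1)%nat -> HorCond d K tau Q h k)) /\
  (forall w : nat -> vec,
      exists m : nat -> R,
        m O = 0 /\ m n = 0 /\
        Hor d n K tau Q (fsub w (vert d tau m)) /\
        (forall m' : nat -> R, m' O = 0 -> m' n = 0 ->
           Hor d n K tau Q (fsub w (vert d tau m')) ->
           forall k, (k <= n)%nat -> m' k = m k) /\
        (forall m' : nat -> R, m' O = 0 -> m' n = 0 ->
           (Hor d n K tau Q (fsub w (vert d tau m')) <->
            (forall k, (1 <= k)%nat -> (k <= n - 1)%nat ->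
               Acoef d tau Q k * m' (S k) + Bcoef d K tau Q k * m' k
               + Ccoef d tau Q k * m' (k - 1)%nat = Dcoef d K tau Q w k)))).
Proof.
  intros _ Hnz Hpi Hiso.
  split; [exact (Hor_iff_HorCond d n K tau Q Hnz) | intros w].
  destruct (recurrence_solvable d n K tau Q Hnz Hpi Hiso (Dcoef d K tau Q w))
    as [m [H0 [Hn Hrec]]].
  exists m. split; [exact H0|]. split; [exact Hn|].
  split; [apply Hor_fsub_vert_iff; assumption|].
  split.
  - intros m' H0' Hn' Hm'. apply (recurrence_unique d n K tau Q Hnz Hpi Hiso (Dcoef d K tau Q w));
      try assumption. apply Hor_fsub_vert_iff; assumption.
  - intros m' _ _. apply Hor_fsub_vert_iff; assumption.
Qed.
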